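(* Let $N\ge c\geq 2$ and let $\Gamma$ be the $c$-complete hypergraph on $N$ vertices. Then the spectrum of its (signless) normalized Laplacian is given by $\frac{N-c}{N-1}$, with multiplicity $N-1$, and $c$, with multiplicity $1$.
   Context: A hypergraph $\Gamma=(\mathcal{V},\mathcal{H})$ has a finite vertex set $\mathcal{V}=\{v_1,\ldots,v_N\}$ and a set $\mathcal{H}$ of nonempty subsets of $\mathcal{V}$ (hyperedges). $\deg(v)$ is the number of hyperedges containing $v$, $D$ the diagonal degree matrix, $A$ the matrix with $A_{ii}=0$ and $A_{ij}=-\#\{h\in\mathcal{H}: v_i,v_j\in h\}$ for $i\ne j$, and the (signless) normalized Laplacian is $L=\mathrm{Id}-D^{-1}A$. The $c$-complete hypergraph on $N$ vertices is the hypergraph whose hyperedges are all $\binom{N}{c}$ subsets of $\mathcal{V}$ of cardinality $c$. *)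

From HB Require Import structures.
From mathcomp Require Import all_boot all_order all_algebra.
Set Implicit Arguments. Unset Strict Implicit. Unset Printing Implicit Defensive.
Import Order.TTheory GRing.Theory Num.Theory.
Local Open Scope ring_scope.

Definition is_hypergraph (N : nat) (H : {set {set 'I_N}}) : Prop :=
  forall h, h \in H -> h != set0.

Definition hdeg (N : nat) (H : {set {set 'I_N}}) (v : 'I_N) : nat :=
  #|[set h in H | v \in h]|.

Definition hadj (R : ringType) (N : nat) (H : {set {set 'I_N}}) : 'M[R]_N :=
  \matrix_(i, j) (if i == j then 0
                  else - (#|[set h in H | (i \in h) && (j \in h)]|%:R)).

Definition hdegmx (R : ringType) (N : nat) (H : {set {set 'I_N}}) : 'M[R]_N :=
  \matrix_(i, j) (if i == j then (hdeg H i)%:R else 0).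

Definition hlaplacian (R : fieldType) (N : nat) (H : {set {set 'I_N}}) : 'M[R]_N :=
  1%:M - (\matrix_(i, j) (if i == j then ((hdeg H i)%:R)^-1 else 0)) *m hadj R H.

Definition complete_hypergraph (N c : nat) : {set {set 'I_N}} :=
  [set h : {set 'I_N} | #|h| == c].

From HB Require Import structures.
From mathcomp Require Import all_boot all_order all_algebra.
From mathcomp Require Import ring.
Set Implicit Arguments.
Unset Strict Implicit.
Unset Printing Implicit Defensive.

Import Order.TTheory GRing.Theory Num.Theory.
Local Open Scope ring_scope.

(* Every vertex of the c-complete hypergraph lies in C(N-1, c-1) hyperedges and
   every pair of distinct vertices in C(N-2, c-2) of them, so its normalized
   Laplacian is (1 - q) I + q J with q = (c-1)/(N-1) and J the all-ones matrix.
   Since J = 1 1^T has rank one, Sylvester's identity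
   y^n det(y I_m - A B) = y^m det(y I_n - B A) reduces the characteristic
   polynomial to a 1x1 determinant: the eigenvalue 1 - q = (N-c)/(N-1) has
   multiplicity N-1, and the last one is 1 - q + N q = c. *)

Lemma card_supsets_of_card (T : finType) (S : {set T}) k : (#|S| <= k)%N ->
  #|[set h : {set T} | (#|h| == k) && (S \subset h)]| = 'C(#|T| - #|S|, k - #|S|).
Proof.
move=> leSk; rewrite -(cardsC S) addKn -cards_draws.
set sups := [set h | _].
have setUDK_sub (h : {set T}) : S \subset h -> S :|: h :\: S = h.
  by move=> /setIidPr ShS; rewrite -{1}ShS setID.
have inj_setD : {in sups &, injective (fun h => h :\: S)}.
  move=> h1 h2; rewrite !inE => /andP[_ /setUDK_sub {2}<-] /andP[_ /setUDK_sub {2}<-] /= -> //.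
rewrite -(card_in_imset inj_setD); apply: eq_card => g; apply/imsetP/idP.
  move=> [h]; rewrite /sups inE => /andP[/eqP <- Sh] ->.
  by rewrite inE subsetDr cardsD (setIidPr Sh) eqxx.
rewrite inE => /andP[gS /eqP gk].
have disjSg : [disjoint S & g] by rewrite disjoint_sym disjoints_subset.
exists (S :|: g); last by rewrite setDUl setDv set0U; apply/esym/setDidPl; rewrite disjoint_sym.
by rewrite inE cardsU (disjoint_setI0 disjSg) cards0 subn0 gk subnKC // eqxx subsetUl.
Qed.

Lemma hdeg_complete_hypergraph N c (i : 'I_N) : (0 < c)%N ->
  hdeg (complete_hypergraph N c) i = 'C(N.-1, c.-1).
Proof.
move=> c_gt0; have := @card_supsets_of_card _ [set i] c.
rewrite cards1 card_ord !subn1 => <- //.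
by apply: eq_card => h; rewrite !inE sub1set.
Qed.

Lemma card_complete_hypergraph_pair N c (i j : 'I_N) : i != j -> (1 < c)%N ->
  #|[set h in complete_hypergraph N c | (i \in h) && (j \in h)]| = 'C(N.-2, c.-2).
Proof.
move=> neq_ij c_gt1; have := @card_supsets_of_card _ [set i; j] c.
rewrite cards2 neq_ij card_ord !subn2 => <- //.
by apply: eq_card => h; rewrite !inE subUset !sub1set.
Qed.

Lemma hlaplacianE (R : fieldType) N (H : {set {set 'I_N}}) i j :
  hlaplacian R H i j =
    if i == j then 1 else #|[set h in H | (i \in h) && (j \in h)]|%:R / (hdeg H i)%:R.
Proof.
rewrite !mxE (bigD1 i) //= big1 ?addr0 => [|k /negbTE neq_ki]; last first.
  by rewrite !mxE eq_sym neq_ki mul0r.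
rewrite !mxE eqxx; case: eqP => _; first by rewrite mulr0 subr0.
by rewrite mulrN opprK add0r mulrC.
Qed.

Lemma det_scalar_sub_mulmxC (R : comNzRingType) m n (y : R)
    (A : 'M[R]_(m, n)) (B : 'M[R]_(n, m)) :
  y ^+ n * \det (y%:M - A *m B) = y ^+ m * \det (y%:M - B *m A).
Proof.
pose M := block_mx y%:M A B 1%:M.
have factor_up : block_mx 1%:M A 0 1%:M *m block_mx (y%:M - A *m B) 0 B 1%:M = M.
  by rewrite mulmx_block !mul1mx !mul0mx !mulmx1 subrK !add0r.
have factor_low :
    block_mx 1%:M 0 (- B) y%:M *m M = block_mx y%:M A 0 (y%:M - B *m A).
  rewrite mulmx_block !mul1mx !mul0mx !mulmx1 !addr0 !mulNmx mul_scalar_mx.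
  by rewrite mul_mx_scalar addNr addrC.
have detM : \det M = \det (y%:M - A *m B).
  by rewrite -factor_up det_mulmx det_ublock det_lblock !det1 !mul1r mulr1.
have := congr1 determinant factor_low.
by rewrite det_mulmx det_lblock det_ublock detM det1 mul1r !det_scalar.
Qed.

Lemma char_poly_scalar_add_const (R : idomainType) n (a b : R) :
  char_poly (a%:M + const_mx b : 'M[R]_n.+1) =
    ('X - a%:P) ^+ n * ('X - (a + b *+ n.+1)%:P).
Proof.
set y := 'X - a%:P.
pose u : 'cV[{poly R}]_n.+1 := const_mx b%:P.
pose v : 'rV[{poly R}]_n.+1 := const_mx 1.
have rank_one : char_poly_mx (a%:M + const_mx b : 'M[R]_n.+1) = y%:M - u *m v.
  apply/matrixP => i j; rewrite /char_poly_mx map_mxD map_scalar_mx map_const_mx.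
  by rewrite !mxE big_ord1 !mxE mulr1 opprD addrA -polyCN -mulrnBl.
have vu : v *m u = (b%:P *+ n.+1)%:M.
  apply/matrixP => i j; rewrite !ord1 !mxE /= mulr1n.
  by under eq_bigr do rewrite !mxE mul1r; rewrite sumr_const card_ord.
have y_neq0 : y != 0 by rewrite monic_neq0 ?monicXsubC.
apply: (mulfI y_neq0); rewrite /char_poly rank_one.
have := det_scalar_sub_mulmxC y u v; rewrite expr1 => ->.
rewrite vu det_mx11 !mxE /= !mulr1n.
by rewrite exprS -mulrA polyCD polyCMn opprD addrA.
Qed.

Lemma hlaplacian_complete_hypergraph (R : numFieldType) N c :
  (2 <= c)%N -> (c <= N)%N ->
  hlaplacian R (complete_hypergraph N c) =
    ((N - c)%:R / (N - 1)%:R)%:M + const_mx ((c - 1)%:R / (N - 1)%:R).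
Proof.
case: c => [|[|c]] // _; case: N => [|[|n]] // le_cn.
have n1_neq0 : n.+1%:R != 0 :> R by rewrite pnatr_eq0.
apply/matrixP => i j; rewrite hlaplacianE hdeg_complete_hypergraph // !mxE /= !subSS !subn0.
case: eqP => [_ | /eqP neq_ij]; rewrite ?mulr1n ?mulr0n ?add0r.
  by rewrite -mulrDl -natrD addnS subnK ?divff.
rewrite card_complete_hypergraph_pair //=; apply/eqP.
by rewrite eqr_div ?pnatr_eq0 -?lt0n ?bin_gt0 // -!natrM mulnC mul_bin_diag mulnC.
Qed.

Theorem mainTheorem8 (R : numFieldType) (N c : nat) :
  (2 <= c)%N -> (c <= N)%N ->
  char_poly (hlaplacian R (complete_hypergraph N c)) =
    ('X - ((N - c)%:R / (N - 1)%:R)%:P) ^+ (N - 1) * ('X - (c%:R)%:P).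
Proof.
move=> c_ge2 le_cN; rewrite hlaplacian_complete_hypergraph //.
case: N le_cN => [|n] le_cn; first by case: c c_ge2 le_cn => [|[|]].
rewrite char_poly_scalar_add_const subn1 /=; congr (_ * ('X - _%:P)).
have n_neq0 : n%:R != 0 :> R by rewrite pnatr_eq0 -lt0n -ltnS (leq_trans c_ge2 le_cn).
rewrite -mulr_natr !natrB ?(leq_trans _ c_ge2) //; field; exact: n_neq0.
Qed.
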